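(* Assume $0<\underline{d}_w<\overline{d}_w\le L\cos(\underline{\theta}_w)<L/\cos(\underline{\theta}_w)$, where $\underline{\theta}_w\in(0,\pi/2)$. Consider the optimization problem $$\max_{P,d_w,\theta_w}\ \gamma_b(P,d_w,\theta_w)\quad\text{s.t.}\quad \mathcal{D}_{01}(P,d_w,\theta_w)\le2\epsilon^2,\ \ 0<P\le P_m,\ \ \underline{d}_w\le d_w\le\overline{d}_w,\ \ \underline{\theta}_w\le\theta_w\le\frac{\pi}{2}.$$ Then any optimal solution $(P^\ast,d_w^\ast,\theta_w^\ast)$ satisfies $d_w^\ast=\overline{d}_w$ and $\underline{\theta}_w\le\theta_w^\ast\le\arccos(\overline{d}_w/L)$. This conclusion holds regardless of the maximum transmit power constraint $P\le P_m$ (i.e., also when this constraint is removed).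
   Context: Setting: Willie and Bob are ground points at distance $L>0$; a UAV (transmitter) lies in the vertical plane through them, on Bob's side, at distance $d_w>0$ from Willie and at elevation angle $\theta_w\in[0,\pi/2]$ (radians) seen from Willie, and transmits with power $P$. Constants: path-loss exponents $\xi_{\mathrm{L}}<0$, $\xi_{\mathrm{N}}<0$; $a,b>0$; noise variances $\sigma_b^2,\sigma_w^2>0$; blocklength $n\in\mathbb{N}$; covertness parameter $\epsilon>0$; maximum power $P_m>0$. Define $d_b=\sqrt{L^2+d_w^2-2d_wL\cos(\theta_w)}$, $$p_b=\frac{1}{1+a\exp\!\left(-b\left[\frac{180}{\pi}\arcsin\!\left(\frac{d_w\sin\theta_w}{d_b}\right)-a\right]\right)},\qquad p_w=\frac{1}{1+a\exp\!\left(-b\left[\frac{180}{\pi}\theta_w-a\right]\right)},$$ $f(d_w,\theta_w)=d_b^{\xi_{\mathrm{L}}}p_b$, and the SNR at Bob $\gamma_b(P,d_w,\theta_w)=Pf(d_w,\theta_w)/\sigma_b^2$. With $\bar P=P d_w^{\xi_{\mathrm{L}}}p_w+P d_w^{\xi_{\mathrm{N}}}$, define the KL divergence $$\mathcal{D}_{01}(P,d_w,\theta_w)=\frac{n}{2}\left[\ln\!\left(\frac{\bar P+\sigma_w^2}{\sigma_w^2}\right)-\frac{\bar P}{\bar P+\sigma_w^2}\right].$$ *)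

From Stdlib Require Import Reals.
Open Scope R_scope.

Definition d_b (L dw thw : R) : R :=
  sqrt (L ^ 2 + dw ^ 2 - 2 * dw * L * cos thw).

Definition p_b (a b L dw thw : R) : R :=
  / (1 + a * exp (- b * ((180 / PI) * asin (dw * sin thw / d_b L dw thw) - a))).

Definition p_w (a b thw : R) : R :=
  / (1 + a * exp (- b * ((180 / PI) * thw - a))).

Definition f_gain (xiL a b L dw thw : R) : R :=
  Rpower (d_b L dw thw) xiL * p_b a b L dw thw.

Definition gamma_b (xiL a b L sb2 P dw thw : R) : R :=
  P * f_gain xiL a b L dw thw / sb2.

Definition Pbar (xiL xiN a b P dw thw : R) : R :=
  P * Rpower dw xiL * p_w a b thw + P * Rpower dw xiN.

Definition D01 (n : nat) (xiL xiN a b sw2 P dw thw : R) : R :=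
  let Pb := Pbar xiL xiN a b P dw thw in
  (INR n / 2) * (ln ((Pb + sw2) / sw2) - Pb / (Pb + sw2)).

(* feasible set; [powcap] is the optional maximum-power constraint *)
Definition feasible (powcap : R -> Prop) (n : nat) (xiL xiN a b sw2 eps
    dlo dhi thlo : R) (P dw thw : R) : Prop :=
  D01 n xiL xiN a b sw2 P dw thw <= 2 * eps ^ 2 /\
  0 < P /\ powcap P /\
  dlo <= dw <= dhi /\
  thlo <= thw <= PI / 2.

Definition optimal (powcap : R -> Prop) (n : nat) (xiL xiN a b L sb2 sw2 eps
    dlo dhi thlo : R) (P dw thw : R) : Prop :=
  feasible powcap n xiL xiN a b sw2 eps dlo dhi thlo P dw thw /\
  forall P' dw' thw',
    feasible powcap n xiL xiN a b sw2 eps dlo dhi thlo P' dw' thw' ->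
    gamma_b xiL a b L sb2 P' dw' thw' <= gamma_b xiL a b L sb2 P dw thw.

(** Moving the UAV away from Willie ([d_w] up) or lowering it ([theta_w] down)
    can only decrease the power Willie receives, hence the KL divergence, so
    such moves preserve feasibility.  In the plane, with Willie at the origin
    and Bob at [(L, 0)], put [k = dhi / L].  If [cos theta_w < k], the point
    [(dhi, acos k)] is strictly closer to Bob and seen from Bob at elevation
    sine [k], while every point of the disk of radius [dhi] around Willie is
    seen at elevation sine at most [k]; so it is strictly better.  If
    [cos theta_w >= k] but [d_w < dhi], pushing the UAV out to [dhi] along the
    same ray brings it closer to Bob and raises it in Bob's sky.  Either way
    Bob's SNR, increasing in the elevation and decreasing in the distance,
    strictly improves. *)

From Stdlib Require Import Reals Lra Psatz.
Open Scope R_scope.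

Lemma Rlt_Rpower_l_neg x y e : e < 0 -> 0 < x < y -> Rpower y e < Rpower x e.
Proof.
  intros He [Hx Hxy]; unfold Rpower; apply exp_increasing.
  pose proof (ln_increasing x y Hx Hxy); nra.
Qed.

Lemma Rle_Rpower_l_neg x y e : e < 0 -> 0 < x <= y -> Rpower y e <= Rpower x e.
Proof.
  intros He [Hx [Hxy | <-]]; [left; apply Rlt_Rpower_l_neg | ]; lra.
Qed.

Lemma asin_le r1 r2 : -1 <= r1 -> r1 <= r2 -> r2 <= 1 -> asin r1 <= asin r2.
Proof.
  intros H1 H12 H2; apply Rnot_lt_le; intro Hlt.
  pose proof (asin_bound r1); pose proof (asin_bound r2).
  assert (Hsin : sin (asin r2) < sin (asin r1)) by (apply sin_increasing_1; lra).
  rewrite !sin_asin in Hsin by lra; lra.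
Qed.

Lemma ln_ge_1_sub_inv u : 0 < u -> 1 - / u <= ln u.
Proof.
  intros Hu; pose proof (exp_ineq1_le (- ln u)) as Hexp.
  rewrite exp_Ropp, exp_ln in Hexp by exact Hu; lra.
Qed.

Lemma ln_add_inv_le u v : 1 <= u <= v -> ln u + / u <= ln v + / v.
Proof.
  intros [Hu Huv].
  assert (Hsplit : ln v = ln u + ln (v / u)).
  { rewrite <- ln_mult by (try apply Rdiv_lt_0_compat; lra); f_equal; field; lra. }
  assert (Hln := ln_ge_1_sub_inv (v / u) ltac:(apply Rdiv_lt_0_compat; lra)).
  replace (/ (v / u)) with (u / v) in Hln by (field; lra).
  assert (Hgap : 0 <= (v - u) * (u - 1) / (u * v)).
  { apply Rmult_le_pos; [nra | left; apply Rinv_0_lt_compat; nra]. }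
  replace ((v - u) * (u - 1) / (u * v)) with (1 - u / v - (/ u - / v)) in Hgap
    by (field; lra).
  lra.
Qed.

(** The logistic law of the line-of-sight probabilities, [t] in degrees. *)
Definition sigmoid (a b t : R) : R := / (1 + a * exp (- b * (t - a))).

Lemma sigmoid_pos a b t : 0 < a -> 0 < sigmoid a b t.
Proof.
  intros Ha; apply Rinv_0_lt_compat.
  pose proof (exp_pos (- b * (t - a))); nra.
Qed.

Lemma sigmoid_le a b t1 t2 :
  0 < a -> 0 < b -> t1 <= t2 -> sigmoid a b t1 <= sigmoid a b t2.
Proof.
  intros Ha Hb [Ht | <-]; [ | lra].
  apply Rinv_le_contravar; [pose proof (exp_pos (- b * (t2 - a))); nra | ].
  assert (exp (- b * (t2 - a)) < exp (- b * (t1 - a))) by (apply exp_increasing; nra).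
  nra.
Qed.

Lemma sigmoid_deg_le a b x y :
  0 < a -> 0 < b -> x <= y ->
  sigmoid a b (180 / PI * x) <= sigmoid a b (180 / PI * y).
Proof.
  intros Ha Hb Hxy; apply sigmoid_le; auto.
  apply Rmult_le_compat_l; [ | exact Hxy].
  pose proof PI_RGT_0; left; apply Rdiv_lt_0_compat; lra.
Qed.

Lemma p_w_le a b t1 t2 : 0 < a -> 0 < b -> t1 <= t2 -> p_w a b t1 <= p_w a b t2.
Proof. exact (sigmoid_deg_le a b t1 t2). Qed.

Definition elev_sin (L dw thw : R) : R := dw * sin thw / d_b L dw thw.

Lemma p_b_elev_sin a b L dw thw :
  p_b a b L dw thw = sigmoid a b (180 / PI * asin (elev_sin L dw thw)).
Proof. reflexivity. Qed.

(** Willie at the origin, Bob at [(L, 0)], the UAV at [dw (cos thw, sin thw)]. *)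
Lemma d_b_sq_cartesian L dw thw :
  L ^ 2 + dw ^ 2 - 2 * dw * L * cos thw = (L - dw * cos thw) ^ 2 + (dw * sin thw) ^ 2.
Proof. pose proof (sin2_cos2 thw) as Hsc; unfold Rsqr in Hsc; nra. Qed.

Lemma d_b_pos L dw thw : 0 <= dw < L -> 0 < d_b L dw thw.
Proof.
  intros Hdw; unfold d_b; apply sqrt_lt_R0; rewrite d_b_sq_cartesian.
  pose proof (COS_bound thw); pose proof (pow2_ge_0 (dw * sin thw)).
  assert (0 < L - dw * cos thw) by nra; nra.
Qed.

Lemma elev_sin_bounds L dw thw :
  0 <= dw < L -> 0 <= thw <= PI -> 0 <= elev_sin L dw thw <= dw / L.
Proof.
  intros Hdw Hthw.
  assert (Hs : 0 <= sin thw) by (apply sin_ge_0; lra).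
  assert (Hq := d_b_pos L dw thw Hdw).
  assert (HsL : sin thw * L <= d_b L dw thw).
  { unfold d_b; rewrite <- (sqrt_pow2 (sin thw * L)) by nra.
    apply sqrt_le_1_alt; rewrite d_b_sq_cartesian.
    pose proof (sin2_cos2 thw) as Hsc; unfold Rsqr in Hsc.
    pose proof (pow2_ge_0 (L * cos thw - dw)); nra. }
  unfold elev_sin; split.
  - apply Rmult_le_pos; [nra | left; apply Rinv_0_lt_compat; lra].
  - assert (Hgap : 0 <= dw * (d_b L dw thw - sin thw * L) / (d_b L dw thw * L)).
    { apply Rmult_le_pos; [nra | left; apply Rinv_0_lt_compat; nra]. }
    replace (dw * (d_b L dw thw - sin thw * L) / (d_b L dw thw * L))
      with (dw / L - dw * sin thw / d_b L dw thw) in Hgap by (field; lra).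
    lra.
Qed.

(** At [acos k] on the circle of radius [k L], the segment to Bob is tangent
    to the circle, so the elevation sine seen from Bob is exactly [k]. *)
Lemma elev_sin_acos L k : 0 < L -> 0 < k < 1 -> elev_sin L (k * L) (acos k) = k.
Proof.
  intros HL Hk; unfold elev_sin, d_b.
  rewrite cos_acos, sin_acos by lra.
  replace (L ^ 2 + (k * L) ^ 2 - 2 * (k * L) * L * k) with (L ^ 2 * (1 - k²))
    by (unfold Rsqr; ring).
  assert (H1k : 0 < 1 - k²) by (unfold Rsqr; nra).
  rewrite sqrt_mult, sqrt_pow2 by nra.
  pose proof (sqrt_lt_R0 _ H1k); field; lra.
Qed.

Lemma d_b_acos_lt L k dw thw :
  0 < L -> 0 < k < 1 -> 0 < dw -> cos thw < k ->
  d_b L (k * L) (acos k) < d_b L dw thw.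
Proof.
  intros HL Hk Hdw Hcos; unfold d_b; apply sqrt_lt_1_alt.
  rewrite cos_acos by lra.
  pose proof (pow2_ge_0 (dw - k * L)).
  assert (0 < dw * L * (k - cos thw)) by (apply Rmult_lt_0_compat; nra).
  split; [ | nra].
  replace (L ^ 2 + (k * L) ^ 2 - 2 * (k * L) * L * k) with (L ^ 2 * (1 - k ^ 2)) by ring.
  apply Rmult_le_pos; nra.
Qed.

Lemma d_b_lt_farther L dw dw' thw :
  0 <= dw < dw' -> dw' <= L * cos thw -> d_b L dw' thw < d_b L dw thw.
Proof.
  intros Hdw Hdw'; unfold d_b; apply sqrt_lt_1_alt; split.
  - rewrite d_b_sq_cartesian.
    pose proof (pow2_ge_0 (L - dw' * cos thw)); pose proof (pow2_ge_0 (dw' * sin thw)); lra.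
  - assert (0 < (dw' - dw) * (2 * L * cos thw - dw - dw')) by (apply Rmult_lt_0_compat; lra).
    nra.
Qed.

Lemma elev_sin_le_farther L dw dw' thw :
  0 <= dw <= dw' -> 0 <= sin thw -> 0 < d_b L dw' thw <= d_b L dw thw ->
  elev_sin L dw thw <= elev_sin L dw' thw.
Proof.
  intros Hdw Hs Hq; unfold elev_sin, Rdiv.
  apply Rmult_le_compat; [nra | left; apply Rinv_0_lt_compat; lra | nra | ].
  apply Rinv_le_contravar; lra.
Qed.

Lemma gamma_b_lt xiL a b L sb2 P dw thw dw' thw' :
  xiL < 0 -> 0 < a -> 0 < b -> 0 < sb2 -> 0 < P ->
  0 < d_b L dw' thw' < d_b L dw thw ->
  -1 <= elev_sin L dw thw -> elev_sin L dw thw <= elev_sin L dw' thw' ->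
  elev_sin L dw' thw' <= 1 ->
  gamma_b xiL a b L sb2 P dw thw < gamma_b xiL a b L sb2 P dw' thw'.
Proof.
  intros HxiL Ha Hb Hsb HP Hd He He' He''.
  unfold gamma_b, f_gain; rewrite !p_b_elev_sin.
  assert (Hpow := Rlt_Rpower_l_neg _ _ _ HxiL Hd).
  assert (Hsig := sigmoid_deg_le a b _ _ Ha Hb (asin_le _ _ He He' He'')).
  pose proof (exp_pos (xiL * ln (d_b L dw thw))).
  pose proof (sigmoid_pos a b (180 / PI * asin (elev_sin L dw thw)) Ha).
  unfold Rdiv; apply Rmult_lt_compat_r; [apply Rinv_0_lt_compat; lra | ].
  apply Rmult_lt_compat_l; [lra | ].
  unfold Rpower in *; nra.
Qed.

Lemma Pbar_nonneg xiL xiN a b P dw thw :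
  0 < a -> 0 <= P -> 0 <= Pbar xiL xiN a b P dw thw.
Proof.
  intros Ha HP.
  assert (0 < p_w a b thw) by exact (sigmoid_pos a b _ Ha).
  assert (0 < Rpower dw xiL) by apply exp_pos.
  assert (0 < Rpower dw xiN) by apply exp_pos.
  unfold Pbar; apply Rplus_le_le_0_compat; repeat apply Rmult_le_pos; lra.
Qed.

Lemma Pbar_le xiL xiN a b P dw thw dw' thw' :
  0 < a -> 0 < b -> 0 <= P -> xiL < 0 -> xiN < 0 -> 0 < dw <= dw' -> thw' <= thw ->
  Pbar xiL xiN a b P dw' thw' <= Pbar xiL xiN a b P dw thw.
Proof.
  intros Ha Hb HP HxiL HxiN Hdw Hthw; unfold Pbar.
  pose proof (Rle_Rpower_l_neg _ _ _ HxiL Hdw); pose proof (Rle_Rpower_l_neg _ _ _ HxiN Hdw).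
  pose proof (p_w_le a b _ _ Ha Hb Hthw).
  assert (0 < p_w a b thw') by exact (sigmoid_pos a b _ Ha).
  assert (0 < Rpower dw' xiL) by apply exp_pos.
  apply Rplus_le_compat; [rewrite !Rmult_assoc | ]; apply Rmult_le_compat_l; try lra.
  apply Rmult_le_compat; lra.
Qed.

Lemma D01_le n xiL xiN a b sw2 P dw thw dw' thw' :
  0 < sw2 ->
  0 <= Pbar xiL xiN a b P dw' thw' <= Pbar xiL xiN a b P dw thw ->
  D01 n xiL xiN a b sw2 P dw' thw' <= D01 n xiL xiN a b sw2 P dw thw.
Proof.
  intros Hsw HP; unfold D01.
  set (x := Pbar xiL xiN a b P dw' thw') in *; set (y := Pbar xiL xiN a b P dw thw) in *.
  apply Rmult_le_compat_l; [pose proof (pos_INR n); lra | ].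
  assert (Hform : forall z, 0 <= z ->
            ln ((z + sw2) / sw2) - z / (z + sw2) = ln ((z + sw2) / sw2) + / ((z + sw2) / sw2) - 1).
  { intros z Hz; field; lra. }
  rewrite !Hform by lra.
  enough (ln ((x + sw2) / sw2) + / ((x + sw2) / sw2) <= ln ((y + sw2) / sw2) + / ((y + sw2) / sw2))
    by lra.
  apply ln_add_inv_le; split.
  - apply Rmult_le_reg_r with sw2; [lra | ]; unfold Rdiv; rewrite Rmult_assoc, Rinv_l; lra.
  - apply Rmult_le_compat_r; [left; apply Rinv_0_lt_compat | ]; lra.
Qed.

Section Optimum.

Variables (powcap : R -> Prop) (n : nat) (xiL xiN a b L sb2 sw2 eps dlo dhi thlo : R).
Hypotheses (HL : 0 < L) (HxiL : xiL < 0) (HxiN : xiN < 0) (Ha : 0 < a) (Hb : 0 < b)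
  (Hsb : 0 < sb2) (Hsw : 0 < sw2) (Hthlo : 0 < thlo < PI / 2)
  (Hdlo : 0 < dlo) (Hdhi : 0 < dhi <= L * cos thlo).

Local Notation feasible' := (feasible powcap n xiL xiN a b sw2 eps dlo dhi thlo).
Local Notation optimal' := (optimal powcap n xiL xiN a b L sb2 sw2 eps dlo dhi thlo).

Lemma feasible_relocate P dw thw dw' thw' :
  feasible' P dw thw -> dw <= dw' <= dhi -> thlo <= thw' <= thw -> feasible' P dw' thw'.
Proof.
  intros [HD [HP [Hcap [Hdw Hthw]]]] Hdw' Hthw'.
  repeat split; try lra; auto.
  eapply Rle_trans; [ | exact HD].
  apply D01_le; [exact Hsw | split].
  - apply Pbar_nonneg; lra.
  - apply Pbar_le; lra.
Qed.

Lemma optimal_d_b_le_relocate P dw thw dw' thw' :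
  optimal' P dw thw -> dw <= dw' <= dhi -> thlo <= thw' <= thw ->
  0 < d_b L dw' thw' ->
  -1 <= elev_sin L dw thw -> elev_sin L dw thw <= elev_sin L dw' thw' ->
  elev_sin L dw' thw' <= 1 ->
  d_b L dw thw <= d_b L dw' thw'.
Proof.
  intros [Hfeas Hmax] Hdw Hthw Hq He He' He''; apply Rnot_lt_le; intro Hlt.
  assert (Hfeas' := feasible_relocate _ _ _ _ _ Hfeas Hdw Hthw).
  assert (HP : 0 < P) by apply Hfeas.
  pose proof (Hmax _ _ _ Hfeas').
  pose proof (gamma_b_lt xiL a b L sb2 P dw thw dw' thw'); lra.
Qed.

Lemma dhi_lt_L : dhi < L.
Proof.
  pose proof PI_RGT_0.
  assert (cos thlo < 1) by (rewrite <- cos_0; apply cos_decreasing_1; lra).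
  nra.
Qed.

Lemma dhi_ratio_bounds : 0 < dhi / L < 1 /\ dhi / L <= cos thlo.
Proof.
  pose proof dhi_lt_L.
  assert (dhi / L * L = dhi) by (field; lra).
  repeat split.
  - apply Rdiv_lt_0_compat; lra.
  - apply Rmult_lt_reg_r with L; lra.
  - apply Rmult_le_reg_r with L; lra.
Qed.

Lemma optimal_cos_ge P dw thw : optimal' P dw thw -> dhi / L <= cos thw.
Proof.
  intros Hopt; destruct (proj1 Hopt) as [_ [_ [_ [Hdw Hthw]]]].
  destruct dhi_ratio_bounds as [Hk Hk_lo]; set (k := dhi / L) in *.
  assert (HdhiE : dhi = k * L) by (unfold k; field; lra).
  apply Rnot_lt_le; intro Hcos.
  pose proof PI_RGT_0; pose proof (acos_bound k).
  assert (Hcos_acos : cos (acos k) = k) by (apply cos_acos; lra).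
  assert (Hacos : thlo <= acos k <= thw) by (split; apply cos_decr_0; lra).
  assert (Htop : elev_sin L dhi (acos k) = k) by (rewrite HdhiE; apply elev_sin_acos; lra).
  assert (Hcloser : d_b L dhi (acos k) < d_b L dw thw)
    by (rewrite HdhiE; apply d_b_acos_lt; lra).
  assert (Hlow : elev_sin L dw thw <= dw / L) by (apply elev_sin_bounds; nra).
  assert (Hdw_k : dw / L <= k) by (apply Rmult_le_compat_r; [left; apply Rinv_0_lt_compat | ]; lra).
  enough (d_b L dw thw <= d_b L dhi (acos k)) by lra.
  apply (optimal_d_b_le_relocate P dw thw dhi (acos k) Hopt); try lra.
  - apply d_b_pos; nra.
  - enough (0 <= elev_sin L dw thw) by lra. apply elev_sin_bounds; nra.
Qed.

Lemma optimal_dw_eq P dw thw : optimal' P dw thw -> dw = dhi.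
Proof.
  intros Hopt; destruct (proj1 Hopt) as [_ [_ [_ [Hdw Hthw]]]].
  assert (Hcos := optimal_cos_ge _ _ _ Hopt).
  destruct dhi_ratio_bounds as [Hk _].
  assert (Hdhi_cos : dhi <= L * cos thw).
  { apply Rmult_le_compat_l with (r := L) in Hcos; [ | lra].
    replace (L * (dhi / L)) with dhi in Hcos by (field; lra); exact Hcos. }
  pose proof PI_RGT_0; pose proof dhi_lt_L.
  apply Rle_antisym; [lra | apply Rnot_lt_le; intro Hlt].
  assert (Hcloser := d_b_lt_farther L dw dhi thw ltac:(lra) Hdhi_cos).
  assert (Hq : 0 < d_b L dhi thw) by (apply d_b_pos; nra).
  assert (Hs : 0 <= sin thw) by (apply sin_ge_0; lra).
  assert (Hhigher := elev_sin_le_farther L dw dhi thw ltac:(lra) Hs ltac:(lra)).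
  assert (Hlow := elev_sin_bounds L dw thw ltac:(nra) ltac:(lra)).
  assert (Hhigh := elev_sin_bounds L dhi thw ltac:(nra) ltac:(lra)).
  enough (d_b L dw thw <= d_b L dhi thw) by lra.
  apply (optimal_d_b_le_relocate P dw thw dhi thw Hopt); lra.
Qed.

Lemma optimal_location P dw thw :
  optimal' P dw thw -> dw = dhi /\ thlo <= thw <= acos (dhi / L).
Proof.
  intros Hopt; destruct (proj1 Hopt) as [_ [_ [_ [_ Hthw]]]].
  split; [exact (optimal_dw_eq _ _ _ Hopt) | split; [lra | ]].
  destruct dhi_ratio_bounds as [Hk _].
  pose proof PI_RGT_0; pose proof (acos_bound (dhi / L)).
  apply cos_decr_0; try lra.
  rewrite cos_acos by lra; exact (optimal_cos_ge _ _ _ Hopt).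
Qed.

End Optimum.

Theorem theorem1
  (L xiL xiN a b sb2 sw2 eps Pm dlo dhi thlo : R) (n : nat)
  (HL : 0 < L) (HxiL : xiL < 0) (HxiN : xiN < 0) (Ha : 0 < a) (Hb : 0 < b)
  (Hsb : 0 < sb2) (Hsw : 0 < sw2) (Hn : (1 <= n)%nat) (Heps : 0 < eps)
  (HPm : 0 < Pm)
  (Hthlo : 0 < thlo < PI / 2)
  (Hd : 0 < dlo /\ dlo < dhi /\ dhi <= L * cos thlo /\ L * cos thlo < L / cos thlo) :
  (* with the maximum power constraint P <= Pm *)
  (forall P dw thw,
     optimal (fun P => P <= Pm) n xiL xiN a b L sb2 sw2 eps dlo dhi thlo P dw thw ->
     dw = dhi /\ thlo <= thw <= acos (dhi / L)) /\
  (* without the maximum power constraint *)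
  (forall P dw thw,
     optimal (fun _ => True) n xiL xiN a b L sb2 sw2 eps dlo dhi thlo P dw thw ->
     dw = dhi /\ thlo <= thw <= acos (dhi / L)).
Proof.
  destruct Hd as [Hdlo [Hdlo_dhi [Hdhi _]]].
  split; intros P dw thw; apply optimal_location; auto; lra.
Qed.
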